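(* Let $Q$ be any golden rectangle inscribed in the unit circle (i.e. with all four vertices on $\partial\mathbb{D}$). Then there is at least one ellipse $E$ inscribed in $Q$ such that $E$ is the Poncelet curve of a finite Blaschke product $B$ of degree $4$ with $B(0)=0$.
   Context: $\mathbb{D}$ is the open unit disc, $\partial\mathbb{D}$ the unit circle, and $\alpha=\frac{1+\sqrt5}{2}$. A golden rectangle is a rectangle whose longer side length divided by its shorter side length equals $\alpha$. A finite Blaschke product of degree $n$ is $B(z)=\beta\prod_{i=1}^n\frac{z-a_i}{1-\overline{a_i}z}$ with $|\beta|=1$, $|a_i|<1$. For such $B$ with $B(0)=0$ and each $\lambda\in\partial\mathbb{D}$, there are $n$ distinct points $z_1,\dots,z_n\in\partial\mathbb{D}$ with $B(z_j)=\lambda$; the Poncelet curve associated with $B$ is the (unique) curve in $\mathbb{D}$ which, for every $\lambda\in\partial\mathbb{D}$, is inscribed in (tangent to every side of) the polygon whose vertices are these $n$ points taken in order of argument, i.e. the envelope of the lines joining consecutive points of $B^{-1}(\lambda)$. *)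

From Stdlib Require Import Reals List.
From Coquelicot Require Import Coquelicot.
Import ListNotations.
Open Scope R_scope.

Definition alpha : R := (1 + sqrt 5) / 2.

Definition expi (t : R) : C := (cos t, sin t).

Fixpoint csum (n : nat) (f : nat -> C) : C :=
  match n with
  | O => RtoC 0
  | S k => Cplus (csum k f) (f k)
  end.

Definition in_polygon_hull (n : nat) (z : nat -> C) (w : C) : Prop :=
  exists mu : nat -> R,
    (forall j, (j < n)%nat -> 0 <= mu j) /\
    sum_f_R0 mu (pred n) = 1 /\
    w = csum n (fun j => Cmult (RtoC (mu j)) (z j)).

Definition on_segment (p q w : C) : Prop :=
  exists s : R, 0 <= s <= 1 /\ w = Cplus p (Cmult (RtoC s) (Cminus q p)).

(** The (convex) curve E is inscribed in the polygon with consecutive vertices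
    z 0, ..., z (n-1): it lies in the closed polygon and touches every side
    [z j, z (j+1 mod n)] (for a convex curve inside a convex polygon, touching
    a side is the same as being tangent to it). *)
Definition inscribed_in_polygon (E : C -> Prop) (n : nat) (z : nat -> C) : Prop :=
  (forall w, E w -> in_polygon_hull n z w) /\
  (forall j, (j < n)%nat -> exists w, E w /\ on_segment (z j) (z (S j mod n)%nat) w).

Definition is_ellipse (E : C -> Prop) : Prop :=
  exists (f1 f2 : C) (a : R),
    Cmod (Cminus f1 f2) < 2 * a /\
    forall w, E w <-> Cmod (Cminus w f1) + Cmod (Cminus w f2) = 2 * a.

Fixpoint blaschke_prod (l : list C) (z : C) : C :=
  match l with
  | [] => RtoC 1
  | a :: l' => Cmult (Cdiv (Cminus z a) (Cminus (RtoC 1) (Cmult (Cconj a) z)))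
                     (blaschke_prod l' z)
  end.

Definition blaschke (beta : C) (l : list C) (z : C) : C :=
  Cmult beta (blaschke_prod l z).

Definition is_blaschke_data (n : nat) (beta : C) (l : list C) : Prop :=
  length l = n /\ Cmod beta = 1 /\ List.Forall (fun a => Cmod a < 1) l.

Definition ordered_preimages (B : C -> C) (lambda : C) (n : nat) (z : nat -> C) : Prop :=
  exists t : nat -> R,
    (forall j, (S j < n)%nat -> t j < t (S j)) /\
    ((0 < n)%nat -> t (pred n) < t O + 2 * PI) /\
    (forall j, (j < n)%nat -> z j = expi (t j)) /\
    (forall w, (Cmod w = 1 /\ B w = lambda) <-> exists j, (j < n)%nat /\ w = z j).

Definition is_poncelet_curve (E : C -> Prop) (B : C -> C) (n : nat) : Prop :=
  (forall w, E w -> Cmod w < 1) /\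
  forall lambda : C, Cmod lambda = 1 ->
    exists z : nat -> C, ordered_preimages B lambda n z /\ inscribed_in_polygon E n z.

Definition quad (p1 p2 p3 p4 : C) (j : nat) : C :=
  match j with 0 => p1 | 1 => p2 | 2 => p3 | _ => p4 end%nat.

Definition inscribed_golden_rectangle (p1 p2 p3 p4 : C) : Prop :=
  Cmod p1 = 1 /\ Cmod p2 = 1 /\ Cmod p3 = 1 /\ Cmod p4 = 1 /\
  p1 <> p2 /\ p3 <> p2 /\
  Cminus p1 p2 = Cminus p4 p3 /\
  Re (Cmult (Cminus p1 p2) (Cconj (Cminus p3 p2))) = 0 /\
  (Cmod (Cminus p1 p2) = alpha * Cmod (Cminus p3 p2) \/
   Cmod (Cminus p3 p2) = alpha * Cmod (Cminus p1 p2)).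

(** A rectangle inscribed in the unit circle has vertices u, v, -u, -v (its diagonals are
    diameters). Choose g with g^2 = (u^2 + v^2)/2; then |g| < 1. Let E be the ellipse with foci
    g, -g and semi-axes a^2 = (1 + |g|^2)/2, b^2 = (1 - |g|^2)/2, and let B be the Blaschke
    product with zeros 0, 0, g, -g, i.e. B(z) = z^2 (z^2 - g^2) / (1 - conj(g)^2 z^2).

    For u, v on the circle the chord [u, v] is tangent to E iff Re(u conj v) = Re(g^2 conj(u v)),
    a relation preserved by (u, v) -> (v, -u); so then E is inscribed in the rectangle
    u, v, -u, -v, and our choice of g makes the given rectangle such a one. The same relation
    reads u^2 + v^2 = g^2 + conj(g)^2 u^2 v^2, which is exactly what makes the degree 4
    equation B(z) = -u^2 v^2 factor as (z^2 - u^2)(z^2 - v^2) = 0. Finally every lambda on the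
    circle is -u^2 v^2 for some tangent chord [u, v]: the product u v is prescribed up to sign,
    and the tangency fixes the opening angle. *)

From Stdlib Require Import Reals List Lra Lia.
From Coquelicot Require Import Coquelicot.
Import ListNotations.
Open Scope R_scope.

Definition dot (z w : C) : R := fst z * fst w + snd z * snd w.
Definition cross (z w : C) : R := fst z * snd w - snd z * fst w.

Lemma C_ext (z w : C) : fst z = fst w -> snd z = snd w -> z = w.
Proof. destruct z, w; simpl; intros; subst; reflexivity. Qed.

Lemma dot_ge0 (z : C) : 0 <= dot z z.
Proof. unfold dot; nra. Qed.

Lemma dot_eq_0 (z : C) : dot z z = 0 -> z = 0%C.
Proof. destruct z as [x y]; unfold dot; simpl; intros Hz; apply C_ext; simpl; nra. Qed.

Lemma dot_pos (z : C) : z <> 0%C -> 0 < dot z z.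
Proof.
  intros Hz; destruct (Rle_lt_or_eq_dec _ _ (dot_ge0 z)) as [Hpos | E]; [exact Hpos |].
  exfalso; apply Hz, dot_eq_0; symmetry; exact E.
Qed.

Lemma Cmod_sqr_dot (z : C) : Cmod z ^ 2 = dot z z.
Proof. rewrite Cmod2_alt; unfold dot, Re, Im; ring. Qed.

Lemma Cmod_eq_1_dot (z : C) : Cmod z = 1 <-> dot z z = 1.
Proof.
  rewrite <- Cmod_sqr_dot; split; intros Hz.
  - rewrite Hz; ring.
  - apply Rsqr_inj; [apply Cmod_ge_0 | lra |]; unfold Rsqr; lra.
Qed.

Lemma Cmod_lt_1_dot (z : C) : Cmod z < 1 <-> dot z z < 1.
Proof.
  rewrite <- Cmod_sqr_dot; pose proof (Cmod_ge_0 z); split; intros Hz; nra.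
Qed.

Lemma Cmod_sub_sqr (w f : C) : Cmod (w - f) ^ 2 = dot w w - 2 * dot w f + dot f f.
Proof. rewrite Cmod_sqr_dot; unfold dot; simpl; ring. Qed.

Lemma Re_mul_conj (z w : C) : Re (z * Cconj w) = dot z w.
Proof. unfold Re, dot; simpl; ring. Qed.

Lemma dot_sqr_add_cross_sqr (z w : C) : dot z w ^ 2 + cross z w ^ 2 = dot z z * dot w w.
Proof. unfold dot, cross; ring. Qed.

Lemma Cmult_eq_0 (a b : C) : (a * b)%C = 0%C -> a = 0%C \/ b = 0%C.
Proof.
  intros Hab; apply (f_equal Cmod) in Hab; rewrite Cmod_mult, Cmod_0 in Hab.
  destruct (Rmult_integral _ _ Hab) as [Ha | Hb]; [left | right]; apply Cmod_eq_0; assumption.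
Qed.

Lemma Csub_eq_0 (a b : C) : (a - b)%C = 0%C -> a = b.
Proof. intros E; transitivity (a - b + b)%C; [ring | rewrite E; ring]. Qed.

Lemma one_sub_conj_mul_neq0 (a w : C) : Cmod a < 1 -> Cmod w = 1 -> (1 - Cconj a * w)%C <> 0%C.
Proof.
  intros Ha Hw Hz.
  assert (E : (Cconj a * w)%C = 1%C).
  { replace (Cconj a * w)%C with (1 - (1 - Cconj a * w))%C by ring; rewrite Hz; ring. }
  apply (f_equal Cmod) in E; rewrite Cmod_mult, Cmod_conj, Hw, Cmod_1 in E; lra.
Qed.

Lemma exists_Csqrt (z : C) : exists r : C, (r * r)%C = z.
Proof.
  destruct z as [k1 k2].
  set (m := sqrt (k1 ^ 2 + k2 ^ 2)).
  assert (Hm0 : 0 <= m) by apply sqrt_pos.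
  assert (Hm2 : m * m = k1 ^ 2 + k2 ^ 2) by (apply sqrt_sqrt; nra).
  assert (Hk1 : - m <= k1 <= m) by (split; nra).
  set (x := sqrt ((m + k1) / 2)); set (y := sqrt ((m - k1) / 2)).
  assert (Hx : x * x = (m + k1) / 2) by (apply sqrt_sqrt; lra).
  assert (Hy : y * y = (m - k1) / 2) by (apply sqrt_sqrt; lra).
  assert (Hxy : 2 * x * y = Rabs k2).
  { apply Rsqr_inj; [| apply Rabs_pos |].
    - pose proof (sqrt_pos ((m + k1) / 2)); pose proof (sqrt_pos ((m - k1) / 2)).
      unfold x, y; nra.
    - rewrite <- Rsqr_abs; unfold Rsqr.
      replace (2 * x * y * (2 * x * y)) with (4 * (x * x) * (y * y)) by ring.
      rewrite Hx, Hy; nra. }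
  unfold Rabs in Hxy; destruct Rcase_abs; [exists (x, - y) | exists (x, y)];
    apply C_ext; simpl; lra.
Qed.

Lemma expi_mul (a b : R) : (expi a * expi b)%C = expi (a + b).
Proof. unfold expi; apply C_ext; simpl; [rewrite cos_plus | rewrite sin_plus]; ring. Qed.

Lemma expi_add_PI (a : R) : expi (a + PI) = (- expi a)%C.
Proof. unfold expi; apply C_ext; simpl; [apply neg_cos | apply neg_sin]. Qed.

Lemma dot_expi (a b : R) : dot (expi a) (expi b) = cos (b - a).
Proof. unfold dot, expi; simpl; rewrite cos_minus; ring. Qed.

Lemma cross_expi (a b : R) : cross (expi a) (expi b) = sin (b - a).
Proof. unfold cross, expi; simpl; rewrite sin_minus; ring. Qed.

Lemma Cmod_expi (a : R) : Cmod (expi a) = 1.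
Proof.
  apply Cmod_eq_1_dot; rewrite dot_expi; replace (a - a) with 0 by ring; apply cos_0.
Qed.

Lemma unit_circle_expi (z : C) : Cmod z = 1 -> exists t, z = expi t.
Proof.
  rewrite Cmod_eq_1_dot; unfold dot; destruct z as [x y]; simpl; intros Hz.
  assert (Hx : -1 <= x <= 1) by nra.
  assert (Hs : sqrt (1 - x²) = Rabs y).
  { rewrite <- sqrt_Rsqr_abs; f_equal; unfold Rsqr; lra. }
  unfold expi; destruct (Rle_dec 0 y) as [Hy | Hy].
  - exists (acos x); rewrite cos_acos, sin_acos, Hs, Rabs_right by lra; reflexivity.
  - exists (- acos x); rewrite cos_neg, sin_neg, cos_acos, sin_acos, Hs, Rabs_left by lra.
    f_equal; ring.
Qed.

Definition normal (u v : C) : C := (Ci * (u - v))%C.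

Lemma decomp_in_basis (u v w : C) : cross u v <> 0 ->
  w = (RtoC (cross w v / cross u v) * u + RtoC (cross u w / cross u v) * v)%C.
Proof.
  intros HD; apply C_ext; unfold cross in *; simpl; field; exact HD.
Qed.

Lemma Rabs_le_1_of_scaled (t D : R) : D <> 0 -> (t * D) ^ 2 <= D ^ 2 -> Rabs t <= 1.
Proof.
  intros HD Ht; assert (0 < D ^ 2) by (apply pow2_gt_0; exact HD).
  assert (t ^ 2 <= 1) by (apply (Rmult_le_reg_r (D ^ 2)); [| rewrite <- Rpow_mult_distr]; lra).
  apply Rabs_le; split; nra.
Qed.

Lemma parallelogram_hull (u v : C) (x y : R) : Rabs x + Rabs y <= 1 ->
  in_polygon_hull 4 (quad u v (- u) (- v)) (x * u + y * v)%C.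
Proof.
  intros Hxy.
  pose proof (Rle_abs x); pose proof (Rle_abs y).
  pose proof (Rabs_maj2 x); pose proof (Rabs_maj2 y).
  set (s := (1 - Rabs x - Rabs y) / 4).
  (* positive and negative parts of the coordinates, plus equal slack on all vertices *)
  exists (fun j => match j with
                   | 0%nat => (Rabs x + x) / 2 + s
                   | 1%nat => (Rabs y + y) / 2 + s
                   | 2%nat => (Rabs x - x) / 2 + s
                   | _ => (Rabs y - y) / 2 + s end).
  split; [| split].
  - intros j _; unfold s; destruct j as [| [| [| j]]]; lra.
  - simpl; unfold s; field.
  - apply C_ext; simpl; field.
Qed.

Lemma orthogonal_to_frame (m p q : C) : p <> 0%C -> q <> 0%C -> dot p q = 0 ->
  dot m p = 0 -> dot m q = 0 -> m = 0%C.
Proof.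
  intros Hp Hq Hpq Hmp Hmq.
  (* Cramer's rule: cross p q * m is a combination of dot m p and dot m q *)
  pose proof (dot_sqr_add_cross_sqr p q) as Hlag.
  pose proof (dot_pos p Hp); pose proof (dot_pos q Hq).
  assert (Hc : cross p q <> 0) by (intros Hc; rewrite Hpq, Hc in Hlag; nra).
  destruct m as [m1 m2], p as [p1 p2], q as [q1 q2]; unfold dot, cross in *; simpl in *.
  apply C_ext; simpl; apply (Rmult_eq_reg_l (p1 * q2 - p2 * q1)); try exact Hc.
  - transitivity (q2 * (m1 * p1 + m2 * p2) - p2 * (m1 * q1 + m2 * q2)); [ring |].
    rewrite Hmp, Hmq; ring.
  - transitivity (p1 * (m1 * q1 + m2 * q2) - q1 * (m1 * p1 + m2 * p2)); [ring |].
    rewrite Hmp, Hmq; ring.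
Qed.

Lemma inscribed_right_angle_diameter (a b c : C) :
  Cmod a = 1 -> Cmod b = 1 -> Cmod c = 1 -> a <> b -> c <> b ->
  dot (a - b) (c - b) = 0 -> c = (- a)%C.
Proof.
  rewrite !Cmod_eq_1_dot; intros Ha Hb Hc Hab Hcb Hright.
  (* a + c is orthogonal to both legs of the right angle at b *)
  assert (Hac : (a + c)%C = 0%C).
  { apply (orthogonal_to_frame _ (a - b) (c - b)); try exact Hright.
    - intros E; apply Hab, Csub_eq_0, E.
    - intros E; apply Hcb, Csub_eq_0, E.
    - revert Hright; unfold dot in *; simpl; lra.
    - revert Hright; unfold dot in *; simpl; lra. }
  apply Csub_eq_0; rewrite <- Hac; ring.
Qed.

Lemma cross_neq0_on_circle (u v : C) : Cmod u = 1 -> Cmod v = 1 ->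
  u <> v -> u <> (- v)%C -> cross u v <> 0.
Proof.
  rewrite !Cmod_eq_1_dot; intros Hu Hv Huv Huv' Hc.
  pose proof (dot_sqr_add_cross_sqr u v) as Hlag; rewrite Hc, Hu, Hv in Hlag.
  assert (Hsub : dot (u - v) (u - v) = 2 - 2 * dot u v) by (unfold dot in *; simpl; lra).
  assert (Hadd : dot (u - - v) (u - - v) = 2 + 2 * dot u v) by (unfold dot in *; simpl; lra).
  destruct (Rle_dec 0 (dot u v)); [apply Huv | apply Huv'];
    apply Csub_eq_0, dot_eq_0; nra.
Qed.

Section Ellipse.

Variable g : C.

Definition major2 : R := (1 + dot g g) / 2.
Definition minor2 : R := (1 - dot g g) / 2.

(* In coordinates along g this is b^2 x^2 + a^2 y^2 = a^2 b^2, where a^2 = major2,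
   b^2 = minor2 and a^2 - b^2 = |g|^2. *)
Definition on_ellipse (w : C) : Prop :=
  major2 * dot w w - dot w g ^ 2 = major2 * minor2.

Definition ellipse (w : C) : Prop :=
  Cmod (w - g) + Cmod (w - - g) = 2 * sqrt major2.

Definition tangent_chord (u v : C) : Prop := dot u v = dot (g * g) (u * v).

Hypothesis g_in_disc : Cmod g < 1.

Lemma focus_dot_lt_1 : dot g g < 1.
Proof. exact (proj1 (Cmod_lt_1_dot g) g_in_disc). Qed.

Lemma minor2_gt0 : 0 < minor2.
Proof. pose proof focus_dot_lt_1; unfold minor2; lra. Qed.

Lemma major2_gt_focus_dot : dot g g < major2.
Proof. pose proof focus_dot_lt_1; unfold major2; lra. Qed.

Lemma major2_sub_focus_dot : major2 - dot g g = minor2.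
Proof. unfold major2, minor2; field. Qed.

Lemma on_ellipse_support w c : on_ellipse w ->
  dot w c ^ 2 <= minor2 * dot c c + dot c g ^ 2.
Proof.
  unfold on_ellipse; intros Hw.
  pose proof (dot_ge0 g) as Hg.
  (* the defect is a perfect square: Cauchy-Schwarz for the quadratic form of the ellipse *)
  assert (Hsq : (minor2 * dot c c + dot c g ^ 2) * (major2 * dot w w - dot w g ^ 2)
                - major2 * minor2 * dot w c ^ 2
                = (minor2 * cross c w + dot c g * cross g w) ^ 2).
  { unfold minor2, major2, dot, cross. field. }
  rewrite Hw in Hsq.
  pose proof minor2_gt0; pose proof major2_gt_focus_dot.
  assert (0 < major2 * minor2) by (apply Rmult_lt_0_compat; lra).
  assert (0 <= (minor2 * cross c w + dot c g * cross g w) ^ 2) by apply pow2_ge_0.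
  nra.
Qed.

Lemma on_ellipse_dot_le w : on_ellipse w -> dot w w <= major2.
Proof.
  unfold on_ellipse; intros Hw.
  pose proof (dot_sqr_add_cross_sqr w g).
  pose proof minor2_gt0; pose proof major2_sub_focus_dot as Hb.
  apply (Rmult_le_reg_l minor2); [lra |].
  rewrite <- Hb; nra.
Qed.

Lemma on_ellipse_in_disc w : on_ellipse w -> Cmod w < 1.
Proof.
  intros Hw; apply Cmod_lt_1_dot.
  pose proof (on_ellipse_dot_le w Hw); pose proof focus_dot_lt_1.
  unfold major2 in *; lra.
Qed.

Lemma ellipse_iff w : ellipse w <-> on_ellipse w.
Proof.
  unfold ellipse, on_ellipse.
  pose proof major2_gt_focus_dot as HA; pose proof (dot_ge0 g).
  pose proof major2_sub_focus_dot as Hb.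
  set (a := sqrt major2).
  assert (Ha2 : a ^ 2 = major2) by (apply pow2_sqrt; lra).
  assert (Ha : 0 < a) by (apply sqrt_lt_R0; lra).
  pose proof (Cmod_sub_sqr w g) as Hd1; pose proof (Cmod_sub_sqr w (- g)) as Hd2.
  pose proof (dot_sqr_add_cross_sqr w g) as Hlag.
  replace (dot w (- g)) with (- dot w g) in Hd2 by (unfold dot; simpl; ring).
  set (P := dot w g) in *.
  replace (dot (- g) (- g)) with (dot g g) in Hd2 by (unfold dot; simpl; ring).
  set (d1 := Cmod (w - g)) in *; set (d2 := Cmod (w - - g)) in *.
  assert (0 <= d1) by apply Cmod_ge_0; assert (0 <= d2) by apply Cmod_ge_0.
  split.
  - intros Hsum.
    (* d2^2 - d1^2 = 4 P and d1 + d2 = 2 a give d1 * a = a^2 - P *)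
    assert (Hd1a : d1 * a = major2 - P).
    { assert (Hdiff : (d2 - d1) * (2 * a) = 4 * P).
      { rewrite <- Hsum; replace ((d2 - d1) * (d1 + d2)) with (d2 ^ 2 - d1 ^ 2) by ring; lra. }
      nra. }
    assert (Hsq : d1 ^ 2 * a ^ 2 = (major2 - P) ^ 2) by (rewrite <- Hd1a; ring).
    rewrite Hd1, Ha2 in Hsq; nra.
  - intros Hw.
    assert (HP : P ^ 2 < major2 ^ 2).
    { pose proof (on_ellipse_dot_le w Hw).
      assert (dot w w * dot g g <= major2 * dot g g) by (apply Rmult_le_compat_r; lra).
      nra. }
    assert (HPA : - major2 < P < major2) by nra.
    assert (Hfocal : forall d Q, 0 <= d -> d ^ 2 = dot w w - 2 * Q + dot g g ->
                                 0 <= major2 - Q -> Q ^ 2 = P ^ 2 -> d * a = major2 - Q).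
    { intros d Q Hd HdQ HQ HQP.
      apply Rsqr_inj; [nra | lra |].
      unfold Rsqr; replace (d * a * (d * a)) with (d ^ 2 * a ^ 2) by ring.
      rewrite HdQ, Ha2; nra. }
    assert (E1 : d1 * a = major2 - P) by (apply Hfocal; [lra | exact Hd1 | lra | ring]).
    assert (E2 : d2 * a = major2 + P).
    { replace (major2 + P) with (major2 - - P) by ring.
      apply Hfocal; [lra | exact Hd2 | lra | ring]. }
    apply (Rmult_eq_reg_r a); [| lra].
    rewrite Rmult_plus_distr_r, E1, E2; nra.
Qed.

Lemma ellipse_is_ellipse : is_ellipse ellipse.
Proof.
  exists g, (- g)%C, (sqrt major2); split; [| reflexivity].
  replace (g - - g)%C with (2 * g)%C by ring.
  rewrite Cmod_mult, Cmod_R, Rabs_right by lra.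
  apply Rmult_lt_compat_l; [lra |].
  pose proof major2_gt_focus_dot; pose proof (dot_ge0 g).
  rewrite <- (sqrt_pow2 (Cmod g)), Cmod_sqr_dot by apply Cmod_ge_0.
  apply sqrt_lt_1; lra.
Qed.

Lemma tangent_chord_support u v : Cmod u = 1 -> Cmod v = 1 -> tangent_chord u v ->
  minor2 * dot (normal u v) (normal u v) + dot (normal u v) g ^ 2 = cross u v ^ 2.
Proof.
  rewrite !Cmod_eq_1_dot; unfold tangent_chord; intros Hu Hv Huv.
  assert (Hid : 2 * (minor2 * dot (normal u v) (normal u v) + dot (normal u v) g ^ 2
                     - cross u v ^ 2)
    = - (dot u u - 1) - (dot v v - 1) - 2 * (dot u u - 1) * (dot v v - 1)
      + 2 * (dot u v - 1) * (dot u v - dot (g * g) (u * v))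
      + dot (g * g) (u * u) * (dot v v - 1) + dot (g * g) (v * v) * (dot u u - 1)).
  { unfold minor2, normal, dot, cross; simpl; field. }
  rewrite Hu, Hv, Huv in Hid; lra.
Qed.

Lemma tangent_chord_rotate u v : tangent_chord u v -> tangent_chord v (- u).
Proof. unfold tangent_chord, dot; simpl; intros Huv; lra. Qed.

Lemma on_ellipse_chord_strip u v w : Cmod u = 1 -> Cmod v = 1 -> tangent_chord u v ->
  on_ellipse w -> dot w (normal u v) ^ 2 <= cross u v ^ 2.
Proof.
  intros Hu Hv Huv Hw.
  rewrite <- (tangent_chord_support u v Hu Hv Huv).
  exact (on_ellipse_support w (normal u v) Hw).
Qed.

Lemma on_ellipse_in_rectangle u v w (x y : R) : Cmod u = 1 -> Cmod v = 1 -> tangent_chord u v ->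
  cross u v <> 0 -> on_ellipse w -> w = (x * u + y * v)%C -> Rabs x + Rabs y <= 1.
Proof.
  intros Hu Hv Huv HD Hw Ew.
  pose proof (on_ellipse_chord_strip u v w Hu Hv Huv Hw) as Hs1.
  assert (Hu' : Cmod (- u) = 1) by (rewrite Cmod_opp; exact Hu).
  pose proof (on_ellipse_chord_strip v (- u) w Hv Hu' (tangent_chord_rotate u v Huv) Hw) as Hs2.
  replace (cross v (- u)) with (cross u v) in Hs2 by (unfold cross; simpl; ring).
  replace (dot w (normal u v)) with ((x + y) * cross u v) in Hs1
    by (subst w; unfold dot, normal, cross; simpl; ring).
  replace (dot w (normal v (- u))) with ((y - x) * cross u v) in Hs2
    by (subst w; unfold dot, normal, cross; simpl; ring).
  apply Rabs_le_1_of_scaled in Hs1, Hs2; [| exact HD | exact HD].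
  (* |x| + |y| = max (|x + y|, |y - x|) *)
  unfold Rabs in *; repeat destruct Rcase_abs; lra.
Qed.

Lemma tangent_chord_touches u v : Cmod u = 1 -> Cmod v = 1 -> tangent_chord u v ->
  cross u v <> 0 -> exists w, ellipse w /\ on_segment u v w.
Proof.
  intros Hu Hv Huv HD.
  pose proof (tangent_chord_support u v Hu Hv Huv) as Hsupp.
  set (n := normal u v) in *; set (D := cross u v) in *.
  (* the point where the support line with normal n touches the ellipse *)
  set (w := (RtoC (minor2 / D) * n + RtoC (dot n g / D) * g)%C).
  assert (Hw : on_ellipse w).
  { unfold on_ellipse.
    assert (Hid : major2 * dot w w - dot w g ^ 2 - major2 * minor2
                  = major2 * minor2 * (minor2 * dot n n + dot n g ^ 2 - D ^ 2) / D ^ 2).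
    { unfold w, major2, minor2, dot; simpl; field; exact HD. }
    rewrite Hsupp in Hid; lra. }
  assert (Hwn : dot w n = D).
  { transitivity ((minor2 * dot n n + dot n g ^ 2) / D).
    - unfold w, dot; simpl; field; exact HD.
    - rewrite Hsupp; field; exact HD. }
  pose proof (decomp_in_basis u v w HD) as Ew; fold D in Ew.
  set (x := cross w v / D) in Ew; set (y := cross u w / D) in Ew.
  assert (Hxy : x + y = 1).
  { apply (Rmult_eq_reg_r D); [| exact HD].
    rewrite <- Hwn at 2; rewrite Ew; unfold n, normal, D, dot, cross; simpl; ring. }
  pose proof (on_ellipse_in_rectangle u v w x y Hu Hv Huv HD Hw Ew).
  pose proof (Rle_abs x); pose proof (Rabs_pos x); pose proof (Rle_abs y); pose proof (Rabs_pos y).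
  exists w; split; [apply ellipse_iff; exact Hw |].
  exists y; split; [lra |].
  rewrite Ew at 1; replace x with (1 - y) by lra.
  apply C_ext; simpl; ring.
Qed.

Lemma ellipse_inscribed_rectangle u v : Cmod u = 1 -> Cmod v = 1 -> tangent_chord u v ->
  cross u v <> 0 -> inscribed_in_polygon ellipse 4 (quad u v (- u) (- v)).
Proof.
  intros Hu Hv Huv HD; split.
  - intros w Hw; apply ellipse_iff in Hw.
    pose proof (decomp_in_basis u v w HD) as Ew.
    rewrite Ew; apply parallelogram_hull.
    exact (on_ellipse_in_rectangle u v w _ _ Hu Hv Huv HD Hw Ew).
  - assert (Hu' : Cmod (- u) = 1) by (rewrite Cmod_opp; exact Hu).
    assert (Hv' : Cmod (- v) = 1) by (rewrite Cmod_opp; exact Hv).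
    pose proof (tangent_chord_rotate u v Huv) as Hvu.
    pose proof (tangent_chord_rotate v (- u) Hvu) as Huv'.
    pose proof (tangent_chord_rotate (- u) (- v) Huv') as Hvu'.
    replace (- - u)%C with u in Hvu' by ring.
    assert (HD' : forall a b : C, cross a b = cross u v -> cross a b <> 0) by congruence.
    intros j Hj; destruct j as [| [| [| [| j]]]]; simpl; try lia;
      apply tangent_chord_touches; try assumption; apply HD';
      unfold cross; simpl; ring.
Qed.

Definition blaschke_zeros : list C := [RtoC 0; RtoC 0; g; (- g)%C].

Lemma blaschke_zeros_on_circle w : Cmod w = 1 ->
  (blaschke 1 blaschke_zeros w * (1 - Cconj g * Cconj g * (w * w)))%C = (w * w * (w * w - g * g))%C.
Proof.
  intros Hw.
  assert (H1 : (1 - Cconj g * w)%C <> 0%C) by (apply one_sub_conj_mul_neq0; assumption).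
  assert (H2 : (1 - Cconj (- g) * w)%C <> 0%C)
    by (apply one_sub_conj_mul_neq0; [rewrite Cmod_opp |]; assumption).
  unfold blaschke, blaschke_zeros, blaschke_prod, Cdiv.
  replace (Cconj 0) with (RtoC 0) by (apply C_ext; simpl; ring).
  replace (1 - Cconj g * Cconj g * (w * w))%C
    with ((1 - Cconj g * w) * (1 - Cconj (- g) * w))%C
    by (apply C_ext; destruct g, w; simpl; ring).
  field; split; assumption.
Qed.

Lemma blaschke_zeros_data : is_blaschke_data 4 1 blaschke_zeros.
Proof.
  split; [reflexivity | split; [apply Cmod_1 |]].
  repeat constructor; rewrite ?Cmod_0, ?Cmod_opp; lra || exact g_in_disc.
Qed.

Lemma tangent_chord_sum_squares u v : Cmod u = 1 -> Cmod v = 1 -> tangent_chord u v ->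
  (u * u + v * v = g * g + Cconj g * Cconj g * (u * u * (v * v)))%C.
Proof.
  rewrite !Cmod_eq_1_dot; unfold tangent_chord; intros Hu Hv Huv.
  (* on the circle, u^2 + v^2 - g^2 - conj(g)^2 u^2 v^2 = 2 u v (dot u v - dot (g^2) (u v)) *)
  destruct g as [g1 g2], u as [u1 u2], v as [v1 v2]; unfold dot in *; simpl in *.
  set (eU := u1 * u1 + u2 * u2 - 1); set (eV := v1 * v1 + v2 * v2 - 1).
  set (eR := u1 * v1 + u2 * v2
             - ((g1 * g1 - g2 * g2) * (u1 * v1 - u2 * v2)
                + (g1 * g2 + g2 * g1) * (u1 * v2 + u2 * v1))).
  assert (HeU : eU = 0) by (unfold eU; lra); assert (HeV : eV = 0) by (unfold eV; lra);
    assert (HeR : eR = 0) by (unfold eR; lra).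
  apply C_ext; simpl; match goal with |- ?L = ?R => apply (Rminus_diag_uniq L R) end.
  - transitivity (2 * (u1 * v1 - u2 * v2) * eR - (u1 * u1 - u2 * u2) * eV
                  - (v1 * v1 - v2 * v2) * eU + (g1 * g1 - g2 * g2) * (eU + eV + eU * eV));
      [unfold eU, eV, eR; ring | rewrite HeU, HeV, HeR; ring].
  - transitivity (2 * (u1 * v2 + u2 * v1) * eR - (2 * u1 * u2) * eV
                  - (2 * v1 * v2) * eU + (2 * g1 * g2) * (eU + eV + eU * eV));
      [unfold eU, eV, eR; ring | rewrite HeU, HeV, HeR; ring].
Qed.

Lemma blaschke_preimage u v w : Cmod u = 1 -> Cmod v = 1 -> Cmod w = 1 -> tangent_chord u v ->
  (blaschke 1 blaschke_zeros w = (- (u * u * (v * v)))%C <->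
   w = u \/ w = v \/ w = (- u)%C \/ w = (- v)%C).
Proof.
  intros Hu Hv Hw Huv.
  pose proof (blaschke_zeros_on_circle w Hw) as HB.
  set (den := (1 - Cconj g * Cconj g * (w * w))%C) in HB.
  assert (Hden : den <> 0%C).
  { replace den with ((1 - Cconj g * w) * (1 - Cconj (- g) * w))%C
      by (unfold den; apply C_ext; destruct g, w; simpl; ring).
    apply Cmult_neq_0; apply one_sub_conj_mul_neq0; rewrite ?Cmod_opp; assumption. }
  assert (Hfactor : (w * w * (w * w - g * g) + u * u * (v * v) * den
                     = (w - u) * (w - - u) * ((w - v) * (w - - v)))%C).
  { transitivity (w * w * w * w - (g * g + Cconj g * Cconj g * (u * u * (v * v))) * (w * w)
                  + u * u * (v * v))%C; [unfold den; ring |].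
    rewrite <- (tangent_chord_sum_squares u v Hu Hv Huv); ring. }
  set (B := blaschke 1 blaschke_zeros w) in HB |- *.
  transitivity ((w - u) * (w - - u) * ((w - v) * (w - - v)) = 0)%C.
  - rewrite <- Hfactor, <- HB; split; intros E.
    + rewrite E; ring.
    + transitivity ((B * den + u * u * (v * v) * den) / den - u * u * (v * v))%C;
        [field; exact Hden | rewrite E; field; exact Hden].
  - split.
    + intros E; apply Cmult_eq_0 in E as [E | E]; apply Cmult_eq_0 in E as [E | E];
        apply Csub_eq_0 in E; tauto.
    + intros [E | [E | [E | E]]]; rewrite E; ring.
Qed.

Lemma tangent_chord_with_value lam : Cmod lam = 1 ->
  exists s t, s < t < s + PI /\ tangent_chord (expi s) (expi t) /\
              lam = (- (expi s * expi s * (expi t * expi t)))%C.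
Proof.
  intros Hlam; destruct (unit_circle_expi lam Hlam) as [L ->].
  (* u v = e^(i S) is prescribed by lam, and the opening t - s = d by the tangency *)
  set (S := (L + PI) / 2).
  set (gamma := dot (g * g) (expi S)).
  assert (Hgamma : -1 < gamma < 1).
  { pose proof (dot_sqr_add_cross_sqr (g * g) (expi S)) as Hlag.
    pose proof (pow2_ge_0 (cross (g * g) (expi S))).
    pose proof (proj1 (Cmod_eq_1_dot _) (Cmod_expi S)) as HS.
    replace (dot (g * g) (g * g)) with (dot g g ^ 2) in Hlag by (unfold dot; simpl; ring).
    pose proof focus_dot_lt_1; pose proof (dot_ge0 g).
    fold gamma in Hlag; rewrite HS in Hlag.
    assert (gamma ^ 2 < 1) by nra; nra. }
  set (d := acos gamma).
  destruct (acos_bound_lt gamma Hgamma) as [Hd0 HdPI]; fold d in Hd0, HdPI.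
  assert (Hcos : cos d = gamma) by (apply cos_acos; lra).
  exists ((S - d) / 2), ((S + d) / 2); split; [| split]; [lra | |].
  - unfold tangent_chord; rewrite dot_expi, expi_mul.
    replace ((S + d) / 2 - (S - d) / 2) with d by field.
    replace ((S - d) / 2 + (S + d) / 2) with S by field.
    exact Hcos.
  - replace (expi ((S - d) / 2) * expi ((S - d) / 2) * (expi ((S + d) / 2) * expi ((S + d) / 2)))%C
      with (expi (L + PI)) by (rewrite !expi_mul; f_equal; unfold S; field).
    rewrite expi_add_PI; ring.
Qed.

Lemma ellipse_inscribed_in_level_polygons lam : Cmod lam = 1 ->
  exists z, ordered_preimages (blaschke 1 blaschke_zeros) lam 4 z /\
            inscribed_in_polygon ellipse 4 z.
Proof.
  intros Hlam.
  destruct (tangent_chord_with_value lam Hlam) as (s & t & Hst & Huv & ->).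
  pose proof (Cmod_expi s) as Hu; pose proof (Cmod_expi t) as Hv.
  assert (HD : cross (expi s) (expi t) <> 0)
    by (rewrite cross_expi; apply Rgt_not_eq, sin_gt_0; lra).
  exists (quad (expi s) (expi t) (- expi s) (- expi t)); split.
  - exists (fun j => match j with 0%nat => s | 1%nat => t | 2%nat => s + PI | _ => t + PI end).
    split; [| split; [| split]].
    + intros j Hj; destruct j as [| [| [| j]]]; simpl in Hj |- *; lra || lia.
    + intros _; simpl; lra.
    + intros j Hj; destruct j as [| [| [| [| j]]]]; simpl; rewrite ?expi_add_PI; reflexivity || lia.
    + intros w; split.
      * intros [Hw HB]; apply (blaschke_preimage _ _ w Hu Hv Hw Huv) in HB.
        destruct HB as [E | [E | [E | E]]];
          [exists 0%nat | exists 1%nat | exists 2%nat | exists 3%nat]; split; lia || exact E.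
      * intros (j & Hj & E).
        assert (Hw : Cmod w = 1).
        { destruct j as [| [| [| [| j]]]]; simpl in E; subst w;
            rewrite ?Cmod_opp; assumption || lia. }
        split; [exact Hw |]; apply (blaschke_preimage _ _ w Hu Hv Hw Huv).
        destruct j as [| [| [| [| j]]]]; simpl in E; tauto || lia.
  - exact (ellipse_inscribed_rectangle _ _ Hu Hv Huv HD).
Qed.

Lemma ellipse_is_poncelet_curve : is_poncelet_curve ellipse (blaschke 1 blaschke_zeros) 4.
Proof.
  split; [| exact ellipse_inscribed_in_level_polygons].
  intros w Hw; apply on_ellipse_in_disc, ellipse_iff, Hw.
Qed.

End Ellipse.

Lemma blaschke_zeros_at_0 (g : C) : blaschke 1 (blaschke_zeros g) 0 = 0.
Proof.
  unfold blaschke, blaschke_prod, blaschke_zeros, Cdiv.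
  replace (0 - 0)%C with (RtoC 0) by ring; ring.
Qed.

Lemma tangent_chord_mean_square (g u v : C) : Cmod u = 1 -> Cmod v = 1 ->
  (g * g = (u * u + v * v) / 2)%C -> tangent_chord g u v.
Proof.
  rewrite !Cmod_eq_1_dot; unfold tangent_chord; intros Hu Hv Hg; rewrite Hg.
  (* Re (u^2 conj (u v)) = |u|^2 Re (u conj v) *)
  transitivity ((dot u u + dot v v) / 2 * dot u v); [rewrite Hu, Hv; field |].
  unfold dot, Cdiv; simpl; field.
Qed.

Lemma mean_square_in_disc (g u v : C) : Cmod u = 1 -> Cmod v = 1 ->
  u <> v -> u <> (- v)%C -> (g * g = (u * u + v * v) / 2)%C -> Cmod g < 1.
Proof.
  intros Hu Hv Huv Huv' Hg.
  assert (Hsq : (u * u - v * v)%C <> 0%C).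
  { replace (u * u - v * v)%C with ((u - v) * (u - - v))%C by ring.
    apply Cmult_neq_0; intros E; apply Csub_eq_0 in E; contradiction. }
  apply dot_pos in Hsq.
  assert (Hpar : dot (u * u + v * v) (u * u + v * v) + dot (u * u - v * v) (u * u - v * v)
                 = 2 * dot u u ^ 2 + 2 * dot v v ^ 2) by (unfold dot; simpl; ring).
  rewrite (proj1 (Cmod_eq_1_dot u) Hu), (proj1 (Cmod_eq_1_dot v) Hv) in Hpar.
  assert (Hg2 : dot g g ^ 2 = dot (u * u + v * v) (u * u + v * v) / 4)
    by (replace (dot g g ^ 2) with (dot (g * g) (g * g)) by (unfold dot; simpl; ring);
        rewrite Hg; unfold dot, Cdiv; simpl; field).
  apply Cmod_lt_1_dot; pose proof (dot_ge0 g); nra.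
Qed.

Theorem theorem6 (p1 p2 p3 p4 : C) :
  inscribed_golden_rectangle p1 p2 p3 p4 ->
  exists (E : C -> Prop) (beta : C) (l : list C),
    is_ellipse E /\
    inscribed_in_polygon E 4 (quad p1 p2 p3 p4) /\
    is_blaschke_data 4 beta l /\
    blaschke beta l (RtoC 0) = RtoC 0 /\
    is_poncelet_curve E (blaschke beta l) 4.
Proof.
  intros (H1 & H2 & H3 & _ & H12 & H32 & Hpar & Hright & _).
  rewrite Re_mul_conj in Hright.
  pose proof (inscribed_right_angle_diameter p1 p2 p3 H1 H2 H3 H12 H32 Hright) as E3.
  assert (E4 : p4 = (- p2)%C)
    by (transitivity (p1 - p2 + p3)%C; [rewrite Hpar | rewrite E3]; ring).
  subst p3 p4.
  assert (H12' : p1 <> (- p2)%C) by (intros E; apply H32; rewrite E; ring).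
  destruct (exists_Csqrt ((p1 * p1 + p2 * p2) / 2)) as [g Hg].
  pose proof (mean_square_in_disc g p1 p2 H1 H2 H12 H12' Hg) as Hdisc.
  exists (ellipse g), 1%C, (blaschke_zeros g).
  split; [| split; [| split; [| split]]].
  - exact (ellipse_is_ellipse g Hdisc).
  - apply (ellipse_inscribed_rectangle g Hdisc p1 p2 H1 H2).
    + exact (tangent_chord_mean_square g p1 p2 H1 H2 Hg).
    + exact (cross_neq0_on_circle p1 p2 H1 H2 H12 H12').
  - exact (blaschke_zeros_data g Hdisc).
  - exact (blaschke_zeros_at_0 g).
  - exact (ellipse_is_poncelet_curve g Hdisc).
Qed.
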